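(* For each $2p\in\{90, 126, 198, 234, 306, 342\}$ there exists a cyclic DCA$(4,2p+1;2p)$ satisfying P1 and P2.
   Context: A difference covering array DCA$(k,\eta;n)$ over $\mathbb{Z}_n$ (a cyclic DCA) is an $\eta\times k$ matrix $Q=[q(i,j)]$ with entries in $\mathbb{Z}_n$ such that for every pair of distinct columns $j,j'$ the multiset $\{q(i,j)-q(i,j') : 0\le i\le \eta-1\}$ contains every element of $\mathbb{Z}_n$ at least once. A DCA$(k,n+1;n)$ is taken in normalized form: all entries of its last row (row $n$) and last column (column $k-1$) equal $0$. It satisfies P1 if $0$ occurs at least twice in every column, and P2 if for all distinct columns $j,j'$ with $j\neq k-1\neq j'$, the set $\{q(i,j)-q(i,j') : 0\le i\le n-1\}$ equals $\mathbb{Z}_n\setminus\{0\}$. *)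

From HB Require Import structures.
From mathcomp Require Import all_boot all_order all_algebra.
Set Implicit Arguments. Unset Strict Implicit. Unset Printing Implicit Defensive.
Import GRing.Theory.
Local Open Scope ring_scope.

(* A difference covering array DCA(k, eta; n) over Z_n: an eta x k matrix
   with entries in 'Z_n (n >= 2 assumed by callers) such that for all
   distinct columns j, j' every element of Z_n occurs among q(i,j)-q(i,j'). *)
Definition is_DCA (n eta k : nat) (Q : 'M['Z_n]_(eta, k)) : Prop :=
  forall j j' : 'I_k, j != j' ->
    forall x : 'Z_n, exists i : 'I_eta, Q i j - Q i j' = x.

Definition DCA_normalized (n k : nat) (Q : 'M['Z_n]_(n.+1, k.+1)) : Prop :=
  (forall j, Q ord_max j = 0) /\ (forall i, Q i ord_max = 0).

Definition DCA_P1 (n k : nat) (Q : 'M['Z_n]_(n.+1, k.+1)) : Prop :=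
  forall j, (2 <= #|[set i | Q i j == 0%R]|)%N.

Definition DCA_P2 (n k : nat) (Q : 'M['Z_n]_(n.+1, k.+1)) : Prop :=
  forall j j' : 'I_k.+1, j != j' -> j != ord_max -> j' != ord_max ->
    [set Q i j - Q i j' | i in [set i : 'I_n.+1 | i != ord_max]]
      = [set x : 'Z_n | x != 0%R].

From mathcomp Require Import all_boot all_order all_algebra.
Set Implicit Arguments. Unset Strict Implicit. Unset Printing Implicit Defensive.
Import GRing.Theory.

(* Take the last row and column zero, and the other three columns, on rows
   0..n-1, permutations of Z_n whose pairwise row differences avoid 0 and take
   every nonzero value; this is P2.  The difference 0 then comes from the last
   row, differences against the zero column from the permutation property, and
   each permutation column has a zero outside the last row, which gives P1.
   For each n the three columns are explicit and the conditions are checked by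
   computation. *)

Lemma lt_ord_max k (j : 'I_k.+1) : j != ord_max -> j < k.
Proof. by rewrite -val_eqE /= ltn_neqAle -ltnS ltn_ord andbT. Qed.

Section DCAFromCovers.
Variables (n k : nat) (Q : 'M['Z_n]_(n.+1, k.+1)).
Local Open Scope ring_scope.

Definition column_covers (j : 'I_k.+1) : Prop :=
  forall x, exists2 i, i != ord_max & Q i j = x.

Definition diff_covers_nonzero (j j' : 'I_k.+1) : Prop :=
  (forall i, i != ord_max -> Q i j - Q i j' != 0) /\
  (forall x, x != 0 -> exists2 i, i != ord_max & Q i j - Q i j' = x).

Lemma diff_covers_nonzero_sym j j' :
  diff_covers_nonzero j j' -> diff_covers_nonzero j' j.
Proof.
case=> nz cov; split=> [i im|x x_nz]; first by rewrite -oppr_eq0 opprB nz.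
have [|i im eq] := cov (- x); first by rewrite oppr_eq0.
by exists i => //; rewrite -opprB eq opprK.
Qed.

Lemma DCA_P2_of_diff_covers :
  (forall j j' : 'I_k.+1, (j < j')%N -> j' != ord_max -> diff_covers_nonzero j j') ->
  DCA_P2 Q.
Proof.
move=> cover j j' jj' jm j'm.
have [nz cov] : diff_covers_nonzero j j'.
  case: (ltngtP j j') => [lt|gt|/val_inj eq].
  - exact: cover.
  - exact/diff_covers_nonzero_sym/cover.
  - by rewrite eq eqxx in jj'.
apply/setP=> x; rewrite inE; apply/imsetP/idP => [[i]|x_nz].
  by rewrite inE => im ->; exact: nz.
by have [i im <-] := cov x x_nz; exists i; rewrite ?inE.
Qed.

Hypothesis normQ : DCA_normalized Q.
Hypothesis coversQ : forall j, j != ord_max -> column_covers j.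

Lemma is_DCA_of_P2 : DCA_P2 Q -> is_DCA Q.
Proof.
case: normQ => row0 col0 P2 j j' jj' x.
have [eqj|jm] := eqVneq j ord_max.
  have j'm : j' != ord_max by rewrite -eqj eq_sym.
  by have [i _ eq] := coversQ j'm (- x); exists i; rewrite eqj col0 eq sub0r opprK.
have [->|j'm] := eqVneq j' ord_max.
  by have [i _ eq] := coversQ jm x; exists i; rewrite col0 subr0.
have [->|x_nz] := eqVneq x 0; first by exists ord_max; rewrite !row0 subrr.
have : x \in [set x : 'Z_n | x != 0] by rewrite inE.
by rewrite -(P2 j j') // => /imsetP[i _ ->]; exists i.
Qed.

Lemma DCA_P1_of_covers : (0 < n)%N -> DCA_P1 Q.
Proof.
case: normQ => row0 col0 n_gt0 j; apply/card_gt1P.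
have [->|jm] := eqVneq j ord_max.
  exists ord0, ord_max; rewrite !inE !col0 eqxx.
  by split=> //; rewrite -val_eqE /= eq_sym -lt0n.
have [i im eq] := coversQ jm 0.
by exists i, ord_max; rewrite !inE eq row0 eqxx.
Qed.

End DCAFromCovers.

Section ColumnMatrix.
Variables (m : nat) (cols : seq (seq nat)).
Local Notation n := m.+2.
Local Notation k := (size cols).
Local Notation column j := (nth [::] cols j).

(* The default values of [nth] make row [n] and column [k] zero. *)
Definition column_matrix : 'M['Z_n]_(n.+1, k.+1) :=
  \matrix_(i, j) inZp (nth 0 (column j) i).

Definition sub_mod (a b : nat) : nat := (a + (n - b)) %% n.

Definition column_diffs (c c' : seq nat) : seq nat :=
  mkseq (fun i => sub_mod (nth 0 c i) (nth 0 c' i)) n.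

Definition covers_nonzero_residues (d : seq nat) : bool :=
  (0 \notin d) && all (fun y => y \in d) (iota 1 n.-1).

Definition DCA_columns : bool :=
  all (fun c => perm_eq c (iota 0 n)) cols &&
  pairwise (fun c c' => covers_nonzero_residues (column_diffs c c')) cols.

Hypothesis cols_DCA : DCA_columns.

Lemma column_perm j : j < k -> perm_eq (column j) (iota 0 n).
Proof. by case/andP: cols_DCA => /allP perm _ j_lt; apply/perm/mem_nth. Qed.

Lemma size_column j : size (column j) <= n.
Proof.
have [j_lt|j_ge] := ltnP j k; first by rewrite (perm_size (column_perm j_lt)) size_iota.
by rewrite nth_default.
Qed.

Lemma column_entry_lt j i : nth 0 (column j) i < n.
Proof.
have [i_lt|i_ge] := ltnP i (size (column j)); last by rewrite nth_default.
have j_lt : j < k by rewrite ltnNge; apply: contraTN i_lt => /(nth_default [::]) ->.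
by have := mem_nth 0 i_lt; rewrite (perm_mem (column_perm j_lt)) mem_iota => /andP[].
Qed.

Lemma column_matrixE i j : val (column_matrix i j) = nth 0 (column j) i.
Proof. by rewrite mxE /= modn_small // column_entry_lt. Qed.

Lemma column_matrix_subE i j j' :
  val (column_matrix i j - column_matrix i j')%R =
  sub_mod (nth 0 (column j) i) (nth 0 (column j') i).
Proof. by rewrite /= modnDmr !column_matrixE. Qed.

Lemma inord_neq_max i : i < n -> inord i != ord_max :> 'I_n.+1.
Proof. by move=> i_lt; rewrite -val_eqE /= (inordK (leqW i_lt)) ltn_eqF. Qed.

Lemma column_matrix_normalized : DCA_normalized column_matrix.
Proof.
split=> [j|i]; apply: val_inj; rewrite column_matrixE /=.
- by rewrite nth_default ?size_column.
- by rewrite (nth_default [::] (leqnn k)) nth_nil.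
Qed.

Lemma column_matrix_covers j : j != ord_max -> column_covers column_matrix j.
Proof.
move=> jm x; have perm := column_perm (lt_ord_max jm).
have x_in : val x \in column j by rewrite (perm_mem perm) mem_iota; exact: ltn_ord.
have idx_lt : index (val x) (column j) < n.
  by rewrite -[X in _ < X](size_iota 0) -(perm_size perm) index_mem.
exists (inord (index (val x) (column j))); first exact: inord_neq_max.
by apply: val_inj; rewrite column_matrixE (inordK (leqW idx_lt)) nth_index.
Qed.

Lemma column_matrix_diff_covers (j j' : 'I_k.+1) :
  j < j' -> j' != ord_max -> diff_covers_nonzero column_matrix j j'.
Proof.
move=> jj' j'm; have j'_lt := lt_ord_max j'm.
have /andP[zero_notin covers] : covers_nonzero_residues (column_diffs (column j) (column j')).
  by case/andP: cols_DCA => _ /pairwiseP; apply; rewrite // inE (ltn_trans jj').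
set d := column_diffs (column j) (column j') in zero_notin covers.
have diffE i : i != ord_max ->
    val (column_matrix i j - column_matrix i j')%R = nth 0 d i.
  by move=> im; rewrite column_matrix_subE nth_mkseq // lt_ord_max.
split=> [i im|x x_nz].
  apply: contraNneq zero_notin => eq0.
  by rewrite -[0]/(val (0%R : 'Z_n)) -eq0 diffE // mem_nth // size_mkseq lt_ord_max.
have x_in : val x \in d.
  apply: (allP covers); rewrite mem_iota lt0n.
  by apply/andP; split; [exact: x_nz | exact: ltn_ord].
have idx_lt : index (val x) d < n by rewrite -index_mem size_mkseq in x_in.
exists (inord (index (val x) d)); first exact: inord_neq_max.
by apply: val_inj; rewrite diffE ?inord_neq_max // (inordK (leqW idx_lt)) nth_index.
Qed.

Lemma column_matrix_DCA :
  [/\ is_DCA column_matrix, DCA_normalized column_matrix,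
      DCA_P1 column_matrix & DCA_P2 column_matrix].
Proof.
have norm := column_matrix_normalized.
have P2 := DCA_P2_of_diff_covers column_matrix_diff_covers.
split=> //.
- exact: is_DCA_of_P2 norm column_matrix_covers P2.
- exact: DCA_P1_of_covers norm column_matrix_covers _.
Qed.

End ColumnMatrix.

Definition columns90 : seq (seq nat) := [:: [:: 65; 60; 50; 75; 70; 0; 85; 15; 35; 80; 10; 5; 55; 20; 30; 25; 40; 45; 1; 19; 78; 42; 12; 48; 84; 66; 64; 46; 8; 62; 23; 77; 31; 49; 9; 81; 33; 87; 71; 89; 4; 76; 29; 11; 74; 56; 32; 68; 51; 69; 67; 13; 18; 72; 7; 43; 57; 3; 24; 6; 28; 82; 21; 39; 41; 59; 61; 79; 63; 27; 83; 47; 14; 86; 26; 44; 52; 88; 34; 16; 38; 2; 58; 22; 54; 36; 37; 73; 53; 17]; [:: 20; 65; 70; 50; 35; 25; 30; 60; 45; 75; 40; 85; 5; 0; 80; 10; 55; 15; 64; 46; 69; 51; 81; 9; 6; 24; 27; 63; 7; 43; 1; 19; 38; 2; 76; 4; 26; 44; 3; 57; 18; 72; 78; 42; 68; 32; 58; 22; 74; 56; 33; 87; 47; 83; 23; 77; 61; 79; 16; 34; 17; 53; 62; 8; 39; 21; 49; 31; 84; 66; 12; 48; 86; 14; 88; 52; 54; 36; 67; 13; 41; 59; 82; 28; 37; 73; 11; 29; 89; 71]; [:: 15; 80; 40; 85; 75; 45; 20; 0; 50; 35; 5; 60; 30; 70; 65; 55; 10; 25; 37; 73; 76; 4; 39;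 21; 62; 8; 43; 7; 66; 84; 72; 18; 59; 41; 3; 57; 49; 31; 67; 13; 16; 34; 32; 68; 46; 64; 51; 69; 33; 87; 24; 6; 71; 89; 36; 54; 44; 26; 12; 48; 9; 81; 23; 77; 27; 63; 38; 2; 52; 88; 74; 56; 53; 17; 82; 28; 58; 22; 78; 42; 79; 61; 11; 29; 1; 19; 83; 47; 86; 14]].
Definition columns126 : seq (seq nat) := [:: [:: 119; 42; 14; 21; 70; 0; 49; 105; 35; 98; 28; 77; 91; 56; 84; 7; 112; 63; 29; 65; 11; 97; 61; 115; 10; 118; 82; 121; 67; 85; 47; 101; 83; 68; 122; 104; 44; 116; 8; 55; 19; 73; 106; 16; 88; 87; 69; 33; 80; 62; 26; 15; 51; 123; 94; 76; 40; 52; 34; 124; 99; 9; 81; 110; 38; 20; 53; 71; 107; 96; 24; 6; 3; 111; 75; 58; 4; 22; 36; 72; 18; 48; 12; 66; 92; 2; 74; 50; 86; 32; 125; 89; 17; 93; 39; 57; 103; 31; 13; 120; 30; 102; 108; 90; 54; 79; 25; 43; 64; 100; 46; 114; 60; 78; 45; 27; 117; 109; 1; 37; 23; 95; 113; 41; 5; 59]; [:: 56; 119; 70; 14; 35; 7; 84; 42; 63; 21; 112; 49; 77; 0; 98; 28; 91; 105; 20; 110; 38; 74; 92; 2; 61; 115; 97; 53; 71; 107; 30; 102; 120; 118; 82; 10; 6; 96; 24; 16; 88; 106; 95; 113; 23; 69; 33; 87; 109; 1; 37; 34; 124; 52; 64; 100; 46; 44; 116; 8; 80; 62; 26; 4;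 22; 58; 79; 25; 43; 83; 47; 101; 81; 99; 9; 94; 76; 40; 103; 31; 13; 11; 29; 65; 104; 68; 122; 5; 59; 41; 123; 15; 51; 60; 78; 114; 36; 72; 18; 86; 32; 50; 57; 93; 39; 17; 125; 89; 111; 75; 3; 90; 54; 108; 85; 121; 67; 117; 45; 27; 48; 12; 66; 19; 73; 55]; [:: 105; 98; 112; 49; 21; 63; 56; 0; 14; 35; 77; 42; 84; 70; 119; 91; 28; 7; 109; 1; 37; 16; 88; 106; 6; 96; 24; 76; 40; 94; 97; 61; 115; 85; 121; 67; 66; 48; 12; 19; 73; 55; 108; 90; 54; 102; 120; 30; 92; 2; 74; 39; 57; 93; 75; 3; 111; 8; 44; 116; 89; 17; 125; 22; 58; 4; 122; 104; 68; 72; 18; 36; 78; 114; 60; 15; 51; 123; 65; 11; 29; 43; 79; 25; 80; 62; 26; 69; 33; 87; 45; 27; 117; 64; 100; 46; 20; 110; 38; 34; 124; 52; 13; 103; 31; 113; 23; 95; 101; 83; 47; 81; 99; 9; 32; 50; 86; 71; 107; 53; 82; 10; 118; 59; 41; 5]].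
Definition columns198 : seq (seq nat) := [:: [:: 11; 132; 176; 165; 88; 0; 121; 33; 143; 44; 154; 77; 55; 110; 66; 187; 22; 99; 122; 14; 158; 104; 86; 67; 157; 103; 49; 31; 181; 37; 163; 91; 1; 80; 152; 188; 26; 170; 114; 78; 60; 42; 168; 127; 73; 145; 19; 109; 107; 35; 197; 161; 17; 79; 61; 151; 43; 7; 46; 28; 118; 10; 172; 101; 83; 173; 65; 29; 133; 25; 169; 115; 97; 140; 68; 32; 194; 50; 70; 34; 16; 196; 124; 95; 131; 149; 167; 41; 96; 24; 186; 150; 6; 105; 51; 123; 195; 87; 182; 128; 2; 74; 164; 139; 175; 193; 13; 85; 9; 27; 135; 45; 81; 189; 171; 63; 153; 117; 48; 12; 192; 174; 102; 146; 20; 56; 92; 38; 179; 53; 89; 125; 71; 15; 177; 159; 141; 69; 90; 72; 162; 54; 18; 136; 100; 82; 64; 190; 75; 93; 3; 111; 147; 137; 191; 119; 47; 155; 40; 76; 94; 112; 184; 138; 84; 156; 30; 120; 8; 134; 98; 62; 116; 178; 160; 52; 142; 106; 183; 21; 39; 57; 129; 23; 113; 59; 5; 185; 144; 36; 180; 126; 108; 4; 166; 148; 130; 58]; [:: 110; 11; 88; 176; 143; 187; 66; 132; 99; 165; 22; 121; 77; 0; 44; 154; 55; 33; 118; 46; 10; 172; 28; 81; 45; 27; 9; 135; 182; 128; 2; 74; 164; 83; 29; 101; 173; 65; 133; 25; 169; 115; 97; 68; 50; 140; 32; 194; 60; 114; 42; 168; 78; 171; 117; 189; 63; 153; 126; 180;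 108; 36; 144; 177; 69; 15; 159; 141; 151; 79; 43; 7; 61; 73; 109; 127; 145; 19; 137; 191; 119; 47; 155; 111; 3; 147; 93; 75; 13; 193; 85; 175; 139; 102; 174; 12; 48; 192; 156; 138; 30; 120; 84; 49; 103; 31; 157; 67; 90; 72; 162; 54; 18; 80; 152; 188; 26; 170; 184; 112; 76; 40; 94; 122; 14; 158; 104; 86; 163; 181; 91; 1; 37; 113; 185; 23; 59; 5; 51; 87; 105; 123; 195; 129; 57; 21; 183; 39; 62; 98; 116; 134; 8; 179; 53; 89; 125; 71; 136; 100; 82; 64; 190; 167; 149; 41; 131; 95; 161; 197; 17; 35; 107; 146; 20; 56; 92; 38; 24; 6; 96; 186; 150; 130; 148; 58; 166; 4; 124; 196; 34; 70; 16; 160; 106; 178; 52; 142]; [:: 33; 44; 22; 121; 165; 99; 110; 0; 176; 143; 77; 132; 66; 88; 11; 55; 154; 187; 145; 127; 19; 109; 73; 93; 147; 75; 3; 111; 18; 54; 72; 90; 162; 74; 2; 164; 128; 182; 79; 61; 151; 43; 7; 166; 58; 4; 148; 130; 21; 129; 183; 39; 57; 76; 184; 40; 94; 112; 48; 12; 192; 174; 102; 25; 97; 133; 169; 115; 104; 158; 86; 14; 122; 87; 195; 51; 105; 123; 138; 84; 156; 30; 120; 5; 59; 185; 113; 23; 186; 96; 150; 6; 24; 175; 85; 139; 193; 13; 29; 65; 83; 101; 173; 34; 124; 70; 16; 196; 125; 89; 71; 53; 179; 144; 36; 180; 126; 108; 117; 153; 171; 189; 63; 37; 1; 181; 163; 91;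 45; 135; 81; 27; 9; 62; 98; 116; 134; 8; 157; 31; 67; 103; 49; 131; 41; 95; 149; 167; 159; 15; 141; 69; 177; 35; 17; 107; 197; 161; 78; 168; 114; 60; 42; 106; 142; 160; 178; 52; 50; 194; 68; 140; 32; 152; 170; 80; 188; 26; 28; 172; 46; 118; 10; 190; 64; 100; 136; 82; 119; 137; 47; 155; 191; 146; 20; 56; 92; 38]].
Definition columns234 : seq (seq nat) := [:: [:: 65; 78; 104; 39; 52; 0; 13; 195; 143; 26; 208; 221; 91; 182; 156; 169; 130; 117; 176; 86; 158; 50; 122; 32; 16; 178; 142; 196; 160; 88; 7; 151; 223; 115; 187; 97; 77; 23; 113; 95; 185; 131; 215; 125; 197; 89; 161; 71; 101; 173; 209; 155; 191; 29; 206; 98; 44; 8; 188; 80; 14; 68; 212; 230; 140; 194; 144; 198; 108; 126; 36; 90; 181; 127; 217; 199; 55; 1; 84; 174; 102; 210; 138; 228; 226; 28; 46; 136; 154; 190; 22; 40; 166; 94; 220; 4; 147; 129; 3; 75; 183; 165; 233; 179; 35; 17; 107; 53; 211; 139; 103; 157; 121; 49; 110; 200; 128; 2; 164; 20; 92; 146; 56; 74; 218; 38; 62; 134; 170; 116; 152; 224; 25; 205; 61; 43; 133; 79; 112; 76; 58; 202; 184; 148; 150; 60; 132; 24; 96; 6; 119; 227; 47; 83; 137; 11; 214; 70; 232; 106; 34; 124; 167; 59; 5; 203; 149; 41; 216; 180; 162; 72; 54; 18; 201; 57; 219; 93; 21; 111; 118; 172; 82; 100; 10; 64; 19; 109; 37;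 145; 73; 163; 213; 15; 33; 123; 141; 177; 51; 231; 87; 69; 159; 105; 48; 66; 192; 120; 12; 30; 85; 229; 67; 193; 31; 175; 204; 222; 114; 42; 168; 186; 207; 153; 9; 225; 81; 27; 63; 189; 135; 99; 45; 171]; [:: 182; 65; 52; 104; 143; 169; 156; 78; 117; 39; 130; 13; 221; 0; 26; 208; 91; 195; 54; 162; 216; 18; 72; 180; 132; 6; 60; 96; 150; 24; 203; 167; 149; 59; 41; 5; 171; 45; 99; 135; 189; 63; 76; 202; 148; 112; 58; 184; 176; 86; 158; 50; 122; 32; 160; 142; 16; 88; 196; 178; 47; 11; 227; 137; 119; 83; 229; 193; 175; 85; 67; 31; 210; 84; 138; 174; 228; 102; 77; 23; 113; 95; 185; 131; 118; 172; 82; 100; 10; 64; 179; 17; 53; 233; 35; 107; 215; 125; 197; 89; 161; 71; 170; 224; 134; 152; 62; 116; 105; 159; 69; 87; 231; 51; 183; 3; 147; 165; 75; 129; 4; 220; 94; 166; 40; 22; 20; 164; 2; 128; 200; 110; 42; 204; 168; 222; 186; 114; 139; 157; 49; 211; 103; 121; 133; 61; 25; 79; 43; 205; 46; 190; 28; 154; 226; 136; 80; 188; 8; 44; 98; 206; 19; 109; 37; 145; 73; 163; 214; 70; 232; 106; 34; 124; 21; 219; 201; 111; 93; 57; 223; 97; 151; 187; 7; 115; 155; 101; 191; 173; 29; 209; 90; 36; 126; 108; 198; 144; 27; 81; 225; 9; 153; 207; 55; 217; 181; 1; 199; 127; 146; 74; 38; 92; 56; 218; 30; 12; 120; 192; 66;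 48; 140; 212; 14; 194; 230; 68; 177; 141; 123; 33; 15; 213]; [:: 195; 26; 130; 13; 39; 117; 182; 0; 104; 143; 221; 78; 156; 52; 65; 91; 208; 169; 201; 57; 219; 93; 21; 111; 157; 211; 121; 139; 49; 103; 109; 145; 163; 19; 37; 73; 180; 72; 18; 216; 162; 54; 217; 1; 127; 55; 181; 199; 164; 128; 110; 20; 2; 200; 32; 122; 50; 158; 86; 176; 70; 106; 124; 214; 232; 34; 46; 190; 28; 154; 226; 136; 177; 141; 123; 33; 15; 213; 17; 233; 107; 179; 53; 35; 75; 147; 183; 129; 165; 3; 89; 215; 161; 125; 71; 197; 120; 48; 12; 66; 30; 192; 56; 38; 146; 218; 92; 74; 25; 205; 61; 43; 133; 79; 223; 97; 151; 187; 7; 115; 167; 59; 5; 203; 149; 41; 4; 220; 94; 166; 40; 22; 140; 212; 14; 194; 230; 68; 134; 116; 224; 62; 170; 152; 222; 42; 186; 204; 114; 168; 64; 10; 100; 82; 172; 118; 96; 132; 150; 6; 24; 60; 51; 231; 87; 69; 159; 105; 90; 36; 126; 108; 198; 144; 153; 225; 27; 207; 9; 81; 191; 209; 101; 29; 155; 173; 210; 84; 138; 174; 228; 102; 23; 95; 131; 77; 113; 185; 16; 178; 142; 196; 160; 88; 45; 135; 63; 171; 99; 189; 83; 119; 137; 227; 11; 47; 148; 184; 202; 58; 76; 112; 85; 229; 67; 193; 31; 175; 188; 44; 206; 80; 8; 98]].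
Definition columns306 : seq (seq nat) := [:: [:: 119; 204; 68; 255; 34; 0; 85; 51; 17; 170; 136; 221; 289; 272; 102; 187; 238; 153; 178; 16; 304; 268; 106; 70; 52; 196; 78; 258; 6; 114; 294; 96; 150; 24; 38; 110; 254; 236; 2; 290; 128; 200; 75; 201; 147; 39; 165; 57; 3; 129; 292; 40; 148; 58; 112; 22; 130; 184; 299; 173; 227; 29; 209; 11; 65; 245; 125; 233; 143; 269; 71; 197; 107; 215; 83; 47; 281; 137; 101; 263; 191; 155; 166; 94; 256; 274; 202; 220; 76; 4; 88; 142; 250; 160; 214; 124; 232; 286; 152; 134; 98; 26; 8; 242; 206; 188; 10; 190; 244; 46; 226; 28; 82; 262; 222; 240; 276; 42; 60; 132; 168; 186; 203; 185; 149; 77; 59; 293; 257; 239; 208; 280; 118; 100; 172; 154; 298; 64; 105; 159; 267; 177; 231; 141; 249; 303; 145; 1; 19; 55; 217; 253; 271; 127; 43; 205; 223; 259; 115; 151; 169; 25; 264; 120; 138; 174; 30; 66; 84; 246; 175; 265; 139; 193; 283; 31; 211; 301; 180; 54; 108; 216; 90; 198; 252; 126; 179; 35; 53; 89; 251; 287; 305; 161; 133; 79; 277; 61; 7; 97; 295; 241; 195; 33; 15; 285; 123; 87; 69; 213; 228; 48; 300; 192; 12; 210; 156; 282; 91; 199; 109; 235; 37; 163; 73; 181; 81; 9; 171; 189; 117; 135; 297; 225; 121; 157; 229; 67; 103; 247; 13; 49; 113; 5; 95; 275; 167; 41; 131; 23; 212; 50; 32; 302; 140; 104; 86; 230; 164;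 56; 146; 20; 218; 92; 182; 74; 237; 219; 183; 111; 93; 21; 291; 273; 44; 224; 278; 80; 260; 62; 116; 296; 270; 234; 162; 18; 288; 144; 72; 36; 243; 27; 207; 261; 45; 99; 279; 63; 194; 14; 266; 158; 284; 176; 122; 248]; [:: 272; 119; 34; 68; 17; 187; 102; 204; 153; 255; 238; 85; 221; 0; 170; 136; 289; 51; 21; 93; 237; 219; 291; 273; 111; 183; 236; 200; 128; 290; 254; 110; 38; 2; 80; 296; 116; 62; 278; 224; 44; 260; 223; 259; 25; 169; 205; 43; 115; 151; 33; 15; 285; 213; 195; 123; 87; 69; 14; 266; 158; 248; 194; 284; 176; 122; 271; 253; 217; 145; 127; 55; 19; 1; 244; 46; 262; 82; 190; 10; 226; 28; 134; 98; 26; 188; 152; 8; 242; 206; 161; 305; 287; 251; 89; 53; 35; 179; 249; 141; 231; 105; 303; 177; 267; 159; 73; 163; 37; 91; 181; 235; 109; 199; 225; 297; 135; 117; 189; 171; 9; 81; 64; 298; 154; 172; 100; 118; 280; 208; 257; 293; 59; 203; 239; 77; 149; 185; 130; 22; 112; 292; 184; 58; 148; 40; 283; 175; 265; 139; 31; 211; 301; 193; 108; 216; 126; 252; 54; 180; 90; 198; 288; 270; 234; 162; 144; 72; 36; 18; 75; 201; 147; 39; 165; 57; 3; 129; 286; 232; 124; 214; 160; 250; 142; 88; 243; 27; 207; 261; 45; 99; 279; 63; 97; 7; 133; 79; 295; 241; 61; 277; 233; 143; 269; 215; 125; 71; 197; 107; 247; 103; 121; 157; 13; 49; 67; 229; 281;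 137; 155; 191; 47; 83; 101; 263; 240; 276; 42; 186; 222; 60; 132; 168; 84; 66; 30; 264; 246; 174; 138; 120; 20; 74; 182; 92; 146; 56; 164; 218; 256; 274; 4; 76; 94; 166; 202; 220; 245; 65; 11; 209; 29; 227; 173; 299; 268; 196; 52; 70; 304; 16; 178; 106; 294; 78; 258; 6; 96; 150; 24; 114; 12; 228; 48; 300; 210; 156; 282; 192; 167; 113; 5; 95; 41; 131; 23; 275; 140; 212; 50; 32; 104; 86; 230; 302]; [:: 51; 170; 238; 85; 255; 153; 272; 0; 68; 17; 221; 204; 102; 34; 119; 289; 136; 187; 32; 302; 230; 86; 50; 212; 140; 104; 70; 106; 178; 16; 52; 196; 268; 304; 82; 28; 226; 10; 262; 46; 244; 190; 182; 92; 218; 164; 74; 20; 146; 56; 87; 123; 195; 33; 69; 213; 285; 15; 246; 84; 66; 30; 174; 138; 120; 264; 228; 48; 300; 192; 12; 210; 156; 282; 180; 54; 108; 216; 90; 198; 252; 126; 301; 211; 31; 283; 193; 139; 265; 175; 111; 273; 291; 21; 183; 219; 237; 93; 133; 79; 277; 61; 7; 97; 295; 241; 278; 80; 296; 116; 224; 44; 260; 62; 287; 251; 179; 35; 305; 161; 89; 53; 240; 276; 42; 186; 222; 60; 132; 168; 115; 43; 205; 223; 151; 169; 25; 259; 1; 19; 55; 127; 145; 217; 253; 271; 121; 157; 229; 67; 103; 247; 13; 49; 3; 57; 165; 75; 129; 39; 147; 201; 215; 107; 197; 71; 269; 143; 233; 125; 220; 202; 166; 94; 76; 4; 274; 256; 292;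 40; 148; 58; 112; 22; 130; 184; 24; 150; 96; 294; 114; 6; 258; 78; 208; 280; 118; 100; 172; 154; 298; 64; 101; 83; 47; 281; 263; 191; 155; 137; 122; 176; 284; 194; 248; 158; 266; 14; 279; 99; 45; 243; 63; 261; 207; 27; 163; 37; 91; 199; 73; 181; 235; 109; 214; 88; 142; 250; 124; 232; 286; 160; 245; 65; 11; 209; 29; 227; 173; 299; 189; 225; 297; 135; 171; 9; 81; 117; 290; 2; 38; 110; 128; 200; 236; 254; 95; 275; 23; 131; 5; 113; 167; 41; 293; 59; 203; 185; 257; 239; 77; 149; 288; 270; 234; 162; 144; 72; 36; 18; 231; 105; 159; 267; 141; 249; 303; 177; 152; 134; 98; 26; 8; 242; 206; 188]].
Definition columns342 : seq (seq nat) := [:: [:: 209; 114; 266; 57; 304; 0; 247; 285; 323; 152; 190; 95; 19; 38; 228; 133; 76; 171; 21; 255; 219; 183; 147; 75; 3; 165; 129; 115; 61; 43; 25; 7; 313; 277; 187; 169; 36; 144; 180; 216; 252; 324; 54; 234; 270; 150; 258; 294; 330; 24; 96; 168; 6; 42; 302; 68; 104; 140; 176; 248; 320; 158; 194; 317; 299; 65; 173; 281; 155; 29; 227; 335; 199; 55; 235; 73; 253; 271; 289; 163; 1; 49; 139; 283; 85; 229; 175; 121; 157; 301; 208; 262; 280; 298; 316; 10; 46; 136; 154; 181; 325; 145; 307; 127; 109; 91; 217; 37; 72; 288; 18; 90; 162; 306; 108; 126; 198; 197; 161; 35; 251; 125; 215; 305; 17; 233; 256; 112; 292; 130; 310; 328;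 4; 220; 58; 263; 83; 137; 191; 245; 11; 119; 47; 101; 274; 184; 40; 238; 94; 148; 202; 166; 22; 296; 44; 188; 332; 134; 80; 26; 62; 206; 254; 218; 92; 308; 182; 272; 20; 74; 290; 106; 196; 340; 142; 286; 232; 178; 214; 16; 113; 167; 185; 203; 221; 257; 293; 41; 59; 204; 132; 222; 312; 60; 240; 78; 186; 276; 118; 244; 172; 100; 28; 226; 82; 64; 334; 265; 319; 337; 13; 31; 67; 103; 193; 211; 282; 102; 156; 210; 264; 30; 138; 66; 120; 116; 8; 314; 278; 242; 170; 98; 260; 224; 111; 273; 327; 39; 93; 201; 309; 237; 291; 225; 45; 99; 153; 207; 315; 81; 9; 63; 53; 269; 341; 71; 143; 287; 89; 107; 179; 189; 243; 261; 279; 297; 333; 27; 117; 135; 177; 195; 87; 321; 213; 339; 123; 267; 159; 249; 141; 105; 69; 33; 303; 231; 51; 15; 23; 149; 77; 5; 275; 131; 329; 311; 239; 84; 336; 192; 48; 246; 300; 12; 318; 174; 14; 284; 32; 122; 212; 50; 230; 338; 86; 223; 151; 241; 331; 79; 259; 97; 205; 295; 128; 56; 146; 236; 326; 164; 2; 110; 200; 70; 52; 160; 268; 34; 250; 124; 322; 88]; [:: 38; 209; 304; 266; 323; 133; 228; 114; 171; 57; 76; 247; 95; 0; 152; 190; 19; 285; 308; 92; 20; 290; 218; 74; 272; 254; 182; 67; 211; 31; 193; 13; 337; 319; 103; 265; 202; 238; 22; 148; 274; 184; 94; 40; 166; 146; 128; 236; 2; 110; 326; 200; 56; 164; 15; 231;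 303; 33; 105; 249; 51; 69; 141; 206; 26; 80; 134; 188; 296; 62; 332; 44; 281; 155; 227; 299; 29; 173; 317; 335; 65; 237; 93; 273; 111; 291; 309; 327; 201; 39; 175; 301; 229; 157; 85; 283; 139; 121; 49; 255; 165; 21; 219; 75; 129; 183; 147; 3; 117; 297; 243; 189; 135; 27; 261; 333; 279; 262; 136; 208; 280; 10; 154; 298; 316; 46; 68; 158; 302; 104; 248; 194; 140; 176; 320; 72; 288; 18; 90; 162; 306; 108; 126; 198; 234; 252; 144; 36; 270; 54; 180; 324; 216; 70; 52; 160; 268; 34; 250; 124; 322; 88; 230; 122; 86; 50; 14; 284; 212; 32; 338; 226; 334; 28; 64; 100; 172; 244; 82; 118; 83; 47; 263; 137; 11; 101; 191; 245; 119; 150; 258; 294; 330; 24; 96; 168; 6; 42; 311; 275; 149; 23; 239; 329; 77; 131; 5; 256; 112; 292; 130; 310; 328; 4; 220; 58; 63; 81; 315; 207; 99; 225; 9; 153; 45; 222; 204; 312; 78; 186; 60; 276; 132; 240; 235; 199; 73; 289; 163; 253; 1; 55; 271; 242; 170; 260; 8; 98; 278; 116; 224; 314; 174; 12; 300; 246; 192; 84; 318; 48; 336; 102; 66; 282; 156; 30; 120; 210; 264; 138; 145; 181; 307; 91; 217; 127; 37; 325; 109; 143; 287; 107; 269; 89; 71; 53; 179; 341; 214; 286; 196; 106; 16; 178; 340; 232; 142; 17; 125; 161; 197; 233; 305; 35; 215; 251; 321; 87; 123; 159; 195; 267; 339; 177; 213; 115; 61; 43; 25; 7; 313; 277; 187;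 169; 79; 259; 205; 151; 97; 331; 223; 295; 241; 113; 167; 185; 203; 221; 257; 293; 41; 59]; [:: 285; 152; 76; 247; 57; 171; 38; 0; 266; 323; 95; 114; 228; 304; 209; 19; 190; 133; 139; 157; 49; 283; 175; 301; 85; 229; 121; 306; 198; 162; 126; 90; 18; 288; 108; 72; 213; 339; 267; 195; 123; 321; 177; 159; 87; 185; 113; 203; 293; 41; 221; 59; 167; 257; 230; 122; 86; 50; 14; 284; 212; 32; 338; 20; 308; 290; 272; 254; 218; 182; 92; 74; 158; 176; 68; 302; 194; 320; 104; 248; 140; 219; 21; 183; 3; 165; 147; 129; 255; 75; 273; 237; 111; 327; 201; 291; 39; 93; 309; 43; 115; 25; 277; 187; 7; 169; 61; 313; 142; 340; 178; 16; 196; 214; 232; 106; 286; 271; 1; 253; 163; 73; 235; 55; 289; 199; 60; 240; 186; 132; 78; 312; 204; 276; 222; 56; 110; 128; 146; 164; 200; 236; 326; 2; 261; 189; 279; 27; 117; 297; 135; 243; 333; 116; 8; 314; 278; 242; 170; 98; 260; 224; 208; 262; 280; 298; 316; 10; 46; 136; 154; 23; 149; 77; 5; 275; 131; 329; 311; 239; 29; 173; 335; 155; 317; 299; 281; 65; 227; 54; 216; 270; 324; 36; 144; 252; 180; 234; 13; 337; 103; 211; 319; 193; 67; 265; 31; 172; 118; 100; 82; 64; 28; 334; 244; 226; 11; 101; 245; 47; 191; 137; 83; 119; 263; 300; 174; 246; 318; 48; 192; 336; 12; 84; 287; 179; 143; 107; 71; 341; 269; 89; 53; 292; 256; 130; 4;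 220; 310; 58; 112; 328; 207; 315; 9; 45; 81; 153; 225; 63; 99; 295; 97; 259; 79; 241; 223; 205; 331; 151; 70; 52; 160; 268; 34; 250; 124; 322; 88; 184; 166; 274; 40; 148; 22; 238; 94; 202; 161; 17; 197; 35; 215; 233; 251; 125; 305; 249; 141; 105; 69; 33; 303; 231; 51; 15; 127; 109; 217; 325; 91; 307; 181; 37; 145; 332; 188; 26; 206; 44; 62; 80; 296; 134; 6; 24; 258; 150; 42; 168; 294; 96; 330; 102; 66; 282; 156; 30; 120; 210; 264; 138]].

Lemma DCA_columns90 : DCA_columns 88 columns90. Proof. by vm_compute. Qed.
Lemma DCA_columns126 : DCA_columns 124 columns126. Proof. by vm_compute. Qed.
Lemma DCA_columns198 : DCA_columns 196 columns198. Proof. by vm_compute. Qed.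
Lemma DCA_columns234 : DCA_columns 232 columns234. Proof. by vm_compute. Qed.
Lemma DCA_columns306 : DCA_columns 304 columns306. Proof. by vm_compute. Qed.
Lemma DCA_columns342 : DCA_columns 340 columns342. Proof. by vm_compute. Qed.

Theorem mainTheorem10 :
  forall n : nat, n \in [:: 90; 126; 198; 234; 306; 342] ->
    exists Q : 'M['Z_n]_(n.+1, 4),
      is_DCA Q /\ DCA_normalized Q /\ DCA_P1 Q /\ DCA_P2 Q.
Proof.
have DCA_of_columns m cols : DCA_columns m cols ->
    exists Q : 'M['Z_m.+2]_(m.+3, (size cols).+1),
      is_DCA Q /\ DCA_normalized Q /\ DCA_P1 Q /\ DCA_P2 Q.
  by case/column_matrix_DCA; exists (column_matrix m cols).
move=> n; rewrite !inE.
case/orP=> [/eqP->|]; first exact: DCA_of_columns DCA_columns90.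
case/orP=> [/eqP->|]; first exact: DCA_of_columns DCA_columns126.
case/orP=> [/eqP->|]; first exact: DCA_of_columns DCA_columns198.
case/orP=> [/eqP->|]; first exact: DCA_of_columns DCA_columns234.
case/orP=> [/eqP->|]; first exact: DCA_of_columns DCA_columns306.
by move/eqP->; exact: DCA_of_columns DCA_columns342.
Qed.
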